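(* Let $\eta:0\to X\xrightarrow{\iota}Y\xrightarrow{\pi}S\to0$ be a short exact sequence in $\operatorname{rep}(Q)$ and let $R$ be $R_d$ or $R_{d,\mathrm{str}}$. For every $(V,W)\in\operatorname{Im}\Psi$, the preimage $\Psi^{-1}((V,W))$ is a torsor under the vector space $\operatorname{Hom}_R(W,\Phi(X)/V)$; in particular there is a (non-canonical) bijection $\Psi^{-1}((V,W))\cong\operatorname{Hom}_R(W,\Phi(X)/V)$.
   Context: $K=\mathbb{C}$; $Q$ a finite quiver, $\operatorname{rep}(Q)$ its finite-dimensional representations. For $d\geqslant1$, $Q_d$ has vertices $v(Q)\times\{1,\dots,d\}$, arrows $(i,r)\to(i,r+1)$ ($r\leqslant d-1$) and $(i,r)\to(j,r)$ for each arrow $i\to j$ of $Q$, $r\in\{1,\dots,d\}$. For $d\geqslant2$, $Q_{d,\mathrm{str}}$ has the same vertices and vertical arrows and arrows $(i,r)\to(j,r-1)$ for each arrow $i\to j$, $r\in\{2,\dots,d\}$. $R_d=KQ_d/I$, $R_{d,\mathrm{str}}=KQ_{d,\mathrm{str}}/I$ with $I$ the ideal identifying all paths with equal source and target. $\Phi:\operatorname{rep}(Q)\to\operatorname{Mod}(R)$: $\Phi(X)_{(i,r)}=X_i$, identity on vertical arrows, $X_{i\to j}$ on arrows coming from $i\to j$, $\Phi(f)_{(i,r)}=f_i$. $\operatorname{Gr}^R(T)$ is the set of $R$-submodules of $T$. $\Psi:\operatorname{Gr}^R(\Phi(Y))\to\operatorname{Gr}^R(\Phi(X))\times\operatorname{Gr}^R(\Phi(S))$,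 $U\mapsto(\Phi(\iota)^{-1}(U),\Phi(\pi)(U))$. *)

(* Quiver representations encoded by matrices (row-vector
   convention: a linear map K^m -> K^n is a matrix 'M_(m, n) acting by v *m M),
   subspaces by square matrices via mxalgebra's row-space theory. *)
From HB Require Import structures.
From mathcomp Require Import all_boot all_algebra.
From mathcomp Require Import complex Rstruct.
Set Implicit Arguments.
Unset Strict Implicit.
Unset Printing Implicit Defensive.
Import GRing.Theory.
Local Open Scope ring_scope.

Definition KC : fieldType := (Rdefinitions.R)[i].

Record quiver := Quiver {
  qvert : finType;
  qarr : finType;
  qsrc : qarr -> qvert;
  qtgt : qarr -> qvert }.

Section Reps.
Variables (K : fieldType) (Q : quiver).

Record rep := Rep {
  rdim : qvert Q -> nat;
  rmap : forall a : qarr Q, 'M[K]_(rdim (qsrc a), rdim (qtgt a)) }.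

Definition repfam (X Y : rep) := forall i : qvert Q, 'M[K]_(rdim X i, rdim Y i).

Definition is_rep_hom (X Y : rep) (f : repfam X Y) : Prop :=
  forall a : qarr Q, rmap X a *m f (qtgt a) = f (qsrc a) *m rmap Y a.

Definition short_exact (X Y S : rep) (iota : repfam X Y) (pi : repfam Y S) : Prop :=
  [/\ is_rep_hom iota, is_rep_hom pi &
      forall i, [/\ row_free (iota i), row_full (pi i)
                  & (iota i == kermx (pi i))%MS]].

(* The algebras R_d (str = false, d >= 1) and R_{d,str} (str = true, d >= 2).
   Vertices of Q_d and Q_{d,str} are pairs (i, r) with i a vertex of Q and
   r : 'I_d (levels numbered 0..d-1 instead of 1..d).
   Arrows: vertical (i,r) -> (i,r') with r' = r+1, and, for every arrow
   a : i -> j of Q, a horizontal arrow (i,r) -> (j,r') where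
   r' = r      for Q_d,
   r' = r - 1  (r >= 1, i.e. r >= 2 in 1-based numbering) for Q_{d,str}. *)
Definition vert_step d (r r' : 'I_d) : bool := (r' == r.+1 :> nat).
Definition hor_step (str : bool) d (r r' : 'I_d) : bool :=
  if str then (r == r'.+1 :> nat) else (r == r' :> nat).

(* A family of subspaces of the vector spaces of Phi(X): Phi(X)_(i,r) = X_i. *)
Definition subfam (X : rep) d := forall p : qvert Q * 'I_d, 'M[K]_(rdim X p.1).

(* Gr^R(Phi(X)): R-submodules of Phi(X), i.e. subrepresentations of Phi(X)
   for the quiver Q_d resp. Q_{d,str}.  (The relations I hold automatically in
   submodules of R-modules.)  Phi(X) has identity maps on vertical arrows and
   X_a on arrows coming from a.  A subspace is represented by the canonical
   matrix <<U>> of its row space, so that Leibniz equality of families is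
   equality of submodules. *)
Definition is_Rsub (str : bool) d (X : rep) (U : subfam X d) : Prop :=
  [/\ forall p, (<<U p>>)%MS = U p,
      forall (i : qvert Q) (r r' : 'I_d), vert_step r r' ->
        (U (i, r) <= U (i, r'))%MS
    & forall (a : qarr Q) (r r' : 'I_d), hor_step str r r' ->
        (U (qsrc a, r) *m rmap X a <= U (qtgt a, r'))%MS].

(* Psi(U) = (V, W), where V = Phi(iota)^{-1}(U) and W = Phi(pi)(U);
   Phi(f)_(i,r) = f_i. *)
Definition Psi_is d (X Y S : rep) (iota : repfam X Y) (pi : repfam Y S)
    (U : subfam Y d) (V : subfam X d) (W : subfam S d) : Prop :=
  [/\ forall p, (<<V p>>)%MS = V p,
      forall p, (<<W p>>)%MS = W p,
      forall p (x : 'rV[K]_(rdim X p.1)),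
        (x <= V p)%MS = (x *m iota p.1 <= U p)%MS
    & forall p, (W p == U p *m pi p.1)%MS].

(* Hom_R(W, Phi(X)/V) for W in Gr^R(Phi(S)) and V in Gr^R(Phi(X)):
   a K-linear map W_p -> X_(p.1)/V_p is given by (the restriction to W_p of)
   a linear map f_p : S_(p.1) -> X_(p.1) followed by the quotient map, two
   families giving the same homomorphism iff they agree on W modulo V. *)
Definition homfam d (S X : rep) := forall p : qvert Q * 'I_d,
  'M[K]_(rdim S p.1, rdim X p.1).

Definition is_Rhom_quot (str : bool) d (S X : rep) (W : subfam S d)
    (V : subfam X d) (f : homfam d S X) : Prop :=
  (forall (i : qvert Q) (r r' : 'I_d), vert_step r r' ->
     (W (i, r) *m (f (i, r) - f (i, r')) <= V (i, r'))%MS) /\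
  (forall (a : qarr Q) (r r' : 'I_d), hor_step str r r' ->
     (W (qsrc a, r) *m (f (qsrc a, r) *m rmap X a - rmap S a *m f (qtgt a, r'))
        <= V (qtgt a, r'))%MS).

Definition hom_quot_eq d (S X : rep) (W : subfam S d) (V : subfam X d)
    (f g : homfam d S X) : Prop :=
  forall p, (W p *m (f p - g p) <= V p)%MS.

Definition homfam0 d (S X : rep) : homfam d S X := fun p => 0.
Definition homfamD d (S X : rep) (f g : homfam d S X) : homfam d S X :=
  fun p => f p + g p.

Definition Psi_fibre (str : bool) d (X Y S : rep) (iota : repfam X Y)
    (pi : repfam Y S) (V : subfam X d) (W : subfam S d) (U : subfam Y d) : Prop :=
  is_Rsub str U /\ Psi_is iota pi U V W.

(* T is a torsor (principal homogeneous space) under the additive group of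
   the vector space H = { f | Hf f } / eqH, with zero 0 and addition +. *)
Definition is_torsor (T H : Type) (inT : T -> Prop) (Hf : H -> Prop)
    (eqH : H -> H -> Prop) (zero : H) (add : H -> H -> H)
    (act : H -> T -> T) : Prop :=
  [/\ (exists t, inT t),
      (forall f t, Hf f -> inT t -> inT (act f t)),
      (forall f g t, Hf f -> Hf g -> eqH f g -> inT t -> act f t = act g t),
      (forall t, inT t -> act zero t = t) &
   [/\
      (forall f g t, Hf f -> Hf g -> inT t -> act (add f g) t = act f (act g t)),
      (forall t t', inT t -> inT t' -> exists2 f, Hf f & act f t = t')
    & (forall f t, Hf f -> inT t -> act f t = t -> eqH f zero)]].

Definition is_bij_quot (T H : Type) (inT : T -> Prop) (Hf : H -> Prop)
    (eqH : H -> H -> Prop) (F : T -> H) : Prop :=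
  [/\ (forall t, inT t -> Hf (F t)),
      (forall t t', inT t -> inT t' -> eqH (F t) (F t') -> t = t')
    & (forall f, Hf f -> exists2 t, inT t & eqH (F t) f)].

End Reps.

(* At each vertex choose a linear section of
   pi over W with values in U; for two members U0 and U of the fibre the
   difference of their sections lands in ker pi = im iota, so it is a map
   W -> X, well defined modulo V and R-linear because U0 and U are submodules:
   the coordinate of U.  Conversely an R-homomorphism f : W -> Phi(X)/V acts
   vertexwise through the shear y |-> y + iota (f (pi y)) of Y_i, a linear
   automorphism fixing iota(X_i) and inducing the identity on S_i; the
   R-linearity of f modulo V is what makes the image of a submodule again a
   submodule, and the shear adds f to the coordinate.  Since U meets ker pi
   exactly in iota(V) for every member U, a member is determined by its
   coordinate.
   Vertical arrows act by identities on Phi(-), so they are the special case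
   of horizontal arrows with identity structure maps. *)

From mathcomp Require Import all_boot all_algebra.
From Stdlib Require Import FunctionalExtensionality.
Import GRing.Theory.
Local Open Scope ring_scope.
Set Implicit Arguments.
Unset Strict Implicit.
Unset Printing Implicit Defensive.

Lemma addmxN_sub (K : fieldType) m1 m2 n (A B : 'M[K]_(m1, n)) (C : 'M_(m2, n)) :
  (A <= C)%MS -> (B <= C)%MS -> (A - B <= C)%MS.
Proof. by move=> AC BC; rewrite addmx_sub // eqmx_opp. Qed.

Section ShortExactVertex.
Variables (K : fieldType) (m n k : nat) (io : 'M[K]_(m, n)) (pr : 'M[K]_(n, k)).
Hypothesis io_ker : (io == kermx pr)%MS.

Lemma mulmx_io_pr : io *m pr = 0.
Proof. by apply/eqP; rewrite -sub_kermx; case/andP: io_ker. Qed.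

Lemma mulmx_io_pr_r r (A : 'M_(r, m)) : A *m io *m pr = 0.
Proof. by rewrite -mulmxA mulmx_io_pr mulmx0. Qed.

Lemma ker_pr_pinvmx_io r (A : 'M_(r, n)) : A *m pr = 0 -> A *m pinvmx io *m io = A.
Proof.
move=> A0; apply: mulmxKpV; apply: submx_trans (proj2 (andP io_ker)).
by rewrite sub_kermx A0.
Qed.

Definition shearmx (g : 'M_(k, m)) : 'M_n := 1%:M + pr *m g *m io.

Lemma shearmx_pr g : shearmx g *m pr = pr.
Proof. by rewrite mulmxDl mul1mx mulmx_io_pr_r addr0. Qed.

Lemma io_shearmx g : io *m shearmx g = io.
Proof. by rewrite mulmxDr mulmx1 !mulmxA mulmx_io_pr !mul0mx addr0. Qed.

Lemma shearmx0 : shearmx 0 = 1%:M.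
Proof. by rewrite /shearmx mulmx0 mul0mx addr0. Qed.

Lemma shearmxD f g : shearmx g *m shearmx f = shearmx (f + g).
Proof.
rewrite {1}/shearmx mulmxDl mul1mx -mulmxA io_shearmx /shearmx.
by rewrite mulmxDr mulmxDl addrA.
Qed.

Definition sectmx (U : 'M_n) : 'M_(k, n) := pinvmx (U *m pr) *m U.

Lemma sectmx_sub r (A : 'M_(r, k)) U : (A *m sectmx U <= U)%MS.
Proof. by rewrite mulmxA submxMl. Qed.

Lemma sectmx_pr r (A : 'M_(r, k)) U : (A <= U *m pr)%MS -> A *m sectmx U *m pr = A.
Proof. by move=> AU; rewrite mulmxA -mulmxA mulmxKpV. Qed.

Lemma sectmx_shearmx r (A : 'M_(r, k)) U g : (A <= U *m pr)%MS ->
  A *m sectmx U *m shearmx g = A *m sectmx U + A *m g *m io.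
Proof. by move=> AU; rewrite mulmxDr mulmx1 !(mulmxA (A *m sectmx U)) sectmx_pr. Qed.

Definition shiftmx (U U' : 'M_n) : 'M_(k, m) := (sectmx U' - sectmx U) *m pinvmx io.

Lemma shiftmx_io r (A : 'M_(r, k)) U U' : (A <= U *m pr)%MS -> (A <= U' *m pr)%MS ->
  A *m shiftmx U U' *m io = A *m sectmx U' - A *m sectmx U.
Proof.
move=> AU AU'; rewrite mulmxA ker_pr_pinvmx_io mulmxBr //.
by rewrite mulmxBl !sectmx_pr ?subrr.
Qed.

Lemma shiftmxB U0 U U' : shiftmx U0 U - shiftmx U0 U' = shiftmx U' U.
Proof. by rewrite -mulmxBl opprB addrA subrK. Qed.

Lemma shiftmx_id U : shiftmx U U = 0.
Proof. by rewrite /shiftmx subrr mul0mx. Qed.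

Lemma shearmxK g : shearmx g *m shearmx (- g) = 1%:M.
Proof. by rewrite shearmxD addNr shearmx0. Qed.

Lemma shearmx_free g : row_free (shearmx g).
Proof. by rewrite row_free_unit; case: (mulmx1_unit (shearmxK g)). Qed.

Section Fibre.
Variables (V : 'M[K]_m) (W : 'M[K]_k).

Definition in_fibre (U : 'M[K]_n) :=
  (forall x : 'rV[K]_m, (x <= V)%MS = (x *m io <= U)%MS) /\ (W == U *m pr)%MS.

Section Member.
Variable U : 'M[K]_n.
Hypothesis UVW : in_fibre U.

Lemma fibre_io_sub r (Z : 'M_(r, m)) : (Z *m io <= U)%MS = (Z <= V)%MS.
Proof.
case: UVW => UV _; apply/row_subP/row_subP => ZU i; last by rewrite row_mul -UV.
by rewrite UV -row_mul.
Qed.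

Lemma fibre_V_io : (V *m io <= U)%MS.
Proof. by rewrite fibre_io_sub. Qed.

Lemma fibre_W_pr : (W <= U *m pr)%MS.
Proof. by case: UVW => _ /andP[]. Qed.

Lemma fibre_pr_W : (U *m pr <= W)%MS.
Proof. by case: UVW => _ /andP[]. Qed.

Lemma in_fibre_shearmx g : in_fibre <<U *m shearmx g>>%MS.
Proof.
case: UVW => UV WU; split=> [x|].
  by rewrite genmxE -(io_shearmx g) mulmxA submxMfree ?shearmx_free -?UV.
by rewrite !(eqmxMr _ (genmxE _)) -mulmxA shearmx_pr.
Qed.

End Member.

Lemma fibre_ker_sub U U' r (P : 'M_(r, n)) : in_fibre U -> in_fibre U' ->
  (P <= U')%MS -> P *m pr = 0 -> (P <= U)%MS.
Proof.
move=> UVW U'VW PU' P0; rewrite -(ker_pr_pinvmx_io P0) (fibre_io_sub UVW).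
by rewrite -(fibre_io_sub U'VW) ker_pr_pinvmx_io.
Qed.

Lemma shiftmx_shearmx U g : in_fibre U ->
  (W *m (shiftmx U <<U *m shearmx g>>%MS - g) <= V)%MS.
Proof.
move=> UVW; have UgVW := in_fibre_shearmx UVW g.
rewrite -(fibre_io_sub UgVW) mulmxBr mulmxBl.
rewrite shiftmx_io ?fibre_W_pr // -addrA -opprD -sectmx_shearmx ?fibre_W_pr //.
by rewrite addmxN_sub ?sectmx_sub // genmxE submxMr ?sectmx_sub.
Qed.

Lemma fibre_sub_shiftmx U U' : in_fibre U -> in_fibre U' ->
  (W *m shiftmx U' U <= V)%MS -> (U <= U')%MS.
Proof.
move=> UVW U'VW WdV; set A := U *m pr.
have AW : (A <= W)%MS by exact: fibre_pr_W UVW.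
have AU' : (A <= U' *m pr)%MS by exact: submx_trans (fibre_W_pr U'VW).
rewrite -(subrK (A *m sectmx U) U) addmx_sub //.
  apply: fibre_ker_sub U'VW UVW _ _; first by rewrite addmxN_sub ?sectmx_sub.
  by rewrite mulmxBl sectmx_pr ?subrr.
rewrite -(subrKC (A *m sectmx U') (A *m sectmx U)) -shiftmx_io //.
rewrite addmx_sub ?sectmx_sub //.
by rewrite (fibre_io_sub U'VW); apply: submx_trans WdV; exact: submxMr.
Qed.

End Fibre.

End ShortExactVertex.

Section Arrow.
Variables (K : fieldType) (ms ns ks mt nt kt : nat).
Variables (ios : 'M[K]_(ms, ns)) (prs : 'M[K]_(ns, ks)).
Variables (iot : 'M[K]_(mt, nt)) (prt : 'M[K]_(nt, kt)).
Hypotheses (ios_ker : (ios == kermx prs)%MS) (iot_ker : (iot == kermx prt)%MS).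
Variables (Xa : 'M[K]_(ms, mt)) (Ya : 'M[K]_(ns, nt)) (Sa : 'M[K]_(ks, kt)).
Hypotheses (io_Ya : ios *m Ya = Xa *m iot) (Ya_pr : Ya *m prt = prs *m Sa).
Variables (Vs : 'M[K]_ms) (Ws : 'M[K]_ks) (Vt : 'M[K]_mt) (Wt : 'M[K]_kt).

Lemma shearmx_arrow f f' : shearmx ios prs f *m Ya =
  Ya *m shearmx iot prt f' + prs *m (f *m Xa - Sa *m f') *m iot.
Proof.
rewrite /shearmx mulmxDl mul1mx mulmxDr mulmx1 -addrA; congr (_ + _).
rewrite -mulmxA io_Ya !mulmxA Ya_pr mulmxBr mulmxBl !mulmxA.
by rewrite addrC subrK.
Qed.

Lemma shearmx_arrow_sub Us Ut f f' :
  in_fibre ios prs Vs Ws Us -> in_fibre iot prt Vt Wt Ut ->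
  (Us *m Ya <= Ut)%MS -> (Ws *m (f *m Xa - Sa *m f') <= Vt)%MS ->
  (Us *m shearmx ios prs f *m Ya <= Ut *m shearmx iot prt f')%MS.
Proof.
move=> UsVW UtVW UsYa WsVt; rewrite -mulmxA (shearmx_arrow _ f') mulmxDr addmx_sub //.
  by rewrite mulmxA submxMr.
rewrite !mulmxA -{1}(io_shearmx iot_ker f') mulmxA submxMr //.
apply: submx_trans (fibre_V_io UtVW); rewrite submxMr //.
by apply: submx_trans WsVt; rewrite submxMr ?(fibre_pr_W UsVW).
Qed.

Lemma shiftmx_arrow U0s Us U0t Ut :
  in_fibre ios prs Vs Ws U0s -> in_fibre ios prs Vs Ws Us ->
  in_fibre iot prt Vt Wt U0t -> in_fibre iot prt Vt Wt Ut ->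
  (U0s *m Ya <= U0t)%MS -> (Us *m Ya <= Ut)%MS ->
  (Ws *m (shiftmx ios prs U0s Us *m Xa - Sa *m shiftmx iot prt U0t Ut) <= Vt)%MS.
Proof.
move=> U0sVW UsVW U0tVW UtVW U0Ya UYa.
have WsSa U (U' : 'M_nt) : in_fibre ios prs Vs Ws U -> (U *m Ya <= U')%MS ->
    (Ws *m Sa <= U' *m prt)%MS.
  move=> UVW UU'; apply: submx_trans (submxMr _ (fibre_W_pr UVW)) _.
  by rewrite -mulmxA -Ya_pr mulmxA submxMr.
pose P U U' : 'M_(ks, nt) := Ws *m sectmx prs U *m Ya - Ws *m Sa *m sectmx prt U'.
have P_ker U U' : in_fibre ios prs Vs Ws U -> (U *m Ya <= U')%MS -> P U U' *m prt = 0.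
  move=> UVW UU'; rewrite mulmxBl -(mulmxA (Ws *m sectmx prs U)) Ya_pr.
  rewrite (mulmxA (Ws *m sectmx prs U)).
  by rewrite !sectmx_pr ?subrr ?(fibre_W_pr UVW) ?(WsSa U U').
have P_sub U U' : (U *m Ya <= U')%MS -> (P U U' <= U')%MS.
  move=> UU'; rewrite addmxN_sub ?sectmx_sub //.
  by rewrite (submx_trans _ UU') ?submxMr ?sectmx_sub.
rewrite -(fibre_io_sub UtVW).
have -> : Ws *m (shiftmx ios prs U0s Us *m Xa - Sa *m shiftmx iot prt U0t Ut) *m iot =
    P Us Ut - P U0s U0t.
  set Ds := shiftmx ios prs U0s Us; set Dt := shiftmx iot prt U0t Ut.
  rewrite mulmxBr mulmxBl (mulmxA Ws Ds) -(mulmxA _ Xa) -io_Ya (mulmxA _ ios).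
  rewrite (mulmxA Ws Sa) /Ds /Dt.
  rewrite !shiftmx_io ?(fibre_W_pr UsVW) ?(fibre_W_pr U0sVW) //;
    rewrite ?(WsSa Us Ut UsVW UYa) ?(WsSa U0s U0t U0sVW U0Ya) //.
  by rewrite mulmxBl /P !opprD !opprK addrACA.
apply: addmxN_sub; first exact: P_sub.
apply: (fibre_ker_sub iot_ker UtVW U0tVW); [exact: P_sub | exact: P_ker U0sVW U0Ya].
Qed.

End Arrow.

Section IdentityArrow.
Variables (K : fieldType) (m n k : nat) (io : 'M[K]_(m, n)) (pr : 'M[K]_(n, k)).
Hypothesis io_ker : (io == kermx pr)%MS.
Variables (V V' : 'M[K]_m) (W W' : 'M[K]_k).

Let io_1 : io *m 1%:M = 1%:M *m io. Proof. by rewrite mulmx1 mul1mx. Qed.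
Let pr_1 : 1%:M *m pr = pr *m 1%:M. Proof. by rewrite mulmx1 mul1mx. Qed.

Lemma shearmx_mono U U' f f' :
  in_fibre io pr V W U -> in_fibre io pr V' W' U' -> (U <= U')%MS ->
  (W *m (f - f') <= V')%MS -> (U *m shearmx io pr f <= U' *m shearmx io pr f')%MS.
Proof.
move=> UVW U'VW UU' WV'; rewrite -[U *m _]mulmx1.
by apply: (shearmx_arrow_sub io_ker io_1 pr_1 UVW U'VW); rewrite ?mulmx1 ?mul1mx.
Qed.

Lemma shiftmx_mono U0 U U0' U' :
  in_fibre io pr V W U0 -> in_fibre io pr V W U ->
  in_fibre io pr V' W' U0' -> in_fibre io pr V' W' U' ->
  (U0 <= U0')%MS -> (U <= U')%MS ->
  (W *m (shiftmx io pr U0 U - shiftmx io pr U0' U') <= V')%MS.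
Proof.
move=> U0VW UVW U0'VW U'VW U0U0' UU'.
have := shiftmx_arrow io_ker io_ker io_1 pr_1 U0VW UVW U0'VW U'VW.
by rewrite !mulmx1 mul1mx; apply.
Qed.

End IdentityArrow.

Section ReprFibre.
Variables (K : fieldType) (Q : quiver) (X Y S : rep K Q).
Variables (iota : repfam X Y) (pi : repfam Y S).
Hypothesis eta : short_exact iota pi.
Variables (str : bool) (d : nat) (V : subfam X d) (W : subfam S d).

Let iota_ker i : (iota i == kermx (pi i))%MS.
Proof. by case: eta => _ _ /(_ i)[]. Qed.

Local Notation fibre := (Psi_fibre str iota pi V W).

Lemma Psi_fibre_in_fibre U : fibre U ->
  forall p, in_fibre (iota p.1) (pi p.1) (V p) (W p) (U p).
Proof. by case=> _ [_ _ UV WU] p; split. Qed.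

Definition fibre_act (f : homfam d S X) (U : subfam Y d) : subfam Y d :=
  fun p => <<U p *m shearmx (iota p.1) (pi p.1) (f p)>>%MS.

Definition fibre_coord (U0 U : subfam Y d) : homfam d S X :=
  fun p => shiftmx (iota p.1) (pi p.1) (U0 p) (U p).

Lemma is_Rsub_fibre_act f U :
  is_Rhom_quot str W V f -> fibre U -> is_Rsub str (fibre_act f U).
Proof.
case: eta => iota_hom pi_hom _ [f_vert f_hor] UVW.
have UpVW := Psi_fibre_in_fibre UVW; have [[_ U_vert U_hor] _] := UVW.
split=> [p | i r r' rr' | a r r' rr']; rewrite /fibre_act ?genmx_id // !genmxE.
  by apply: (shearmx_mono (iota_ker i) (UpVW (i, r)) (UpVW (i, r')));
    [apply: U_vert | apply: f_vert].
rewrite (eqmxMr _ (genmxE _)).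
by apply: (shearmx_arrow_sub (iota_ker _) (esym (iota_hom a)) (pi_hom a)
  (UpVW (qsrc a, r)) (UpVW (qtgt a, r'))); [apply: U_hor | apply: f_hor].
Qed.

Lemma Psi_fibre_act f U :
  is_Rhom_quot str W V f -> fibre U -> fibre (fibre_act f U).
Proof.
move=> fR UVW; split; first exact: is_Rsub_fibre_act.
have [_ [V_gen W_gen _ _]] := UVW.
by split=> // p; case: (in_fibre_shearmx (iota_ker p.1) (Psi_fibre_in_fibre UVW p) (f p)).
Qed.

Lemma fibre_act_eq f g U :
  fibre U -> hom_quot_eq W V f g -> fibre_act f U = fibre_act g U.
Proof.
move=> UVW fg; apply: functional_extensionality_dep => p.
have UpVW := Psi_fibre_in_fibre UVW p.
apply/genmxP/andP; split; apply: (shearmx_mono (iota_ker _) UpVW UpVW) _ _ => //.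
by rewrite -opprB mulmxN eqmx_opp.
Qed.

Lemma fibre_act0 U : fibre U -> fibre_act (@homfam0 _ _ d S X) U = U.
Proof.
case=> [[U_gen _ _] _]; apply: functional_extensionality_dep => p.
by rewrite /fibre_act /homfam0 shearmx0 mulmx1 U_gen.
Qed.

Lemma fibre_actD f g U :
  fibre_act (homfamD f g) U = fibre_act f (fibre_act g U).
Proof.
apply: functional_extensionality_dep => p; apply/genmxP.
by rewrite /homfamD !(eqmxMr _ (genmxE _)) -mulmxA (shearmxD (iota_ker _)) submx_refl.
Qed.

Lemma fibre_coord_act f U : fibre U -> hom_quot_eq W V (fibre_coord U (fibre_act f U)) f.
Proof. by move=> UVW p; apply: shiftmx_shearmx (Psi_fibre_in_fibre UVW p). Qed.

Lemma fibre_coord_inj U0 U U' : fibre U -> fibre U' ->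
  hom_quot_eq W V (fibre_coord U0 U) (fibre_coord U0 U') -> U = U'.
Proof.
move=> UVW U'VW UU'; apply: functional_extensionality_dep => p.
have [[U_gen _ _] _] := UVW; have [[U'_gen _ _] _] := U'VW.
have UpVW := Psi_fibre_in_fibre UVW p; have U'pVW := Psi_fibre_in_fibre U'VW p.
rewrite -U_gen -U'_gen; apply/genmxP/andP; split.
  by apply: (fibre_sub_shiftmx (iota_ker _) UpVW U'pVW); rewrite -(shiftmxB _ _ (U0 p)).
apply: (fibre_sub_shiftmx (iota_ker _) U'pVW UpVW).
by rewrite -(shiftmxB _ _ (U0 p)) -opprB mulmxN eqmx_opp.
Qed.

Lemma is_Rhom_quot_coord U0 U :
  fibre U0 -> fibre U -> is_Rhom_quot str W V (fibre_coord U0 U).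
Proof.
case: eta => iota_hom pi_hom _ U0VW UVW.
have U0pVW := Psi_fibre_in_fibre U0VW; have UpVW := Psi_fibre_in_fibre UVW.
have [[_ U0_vert U0_hor] _] := U0VW; have [[_ U_vert U_hor] _] := UVW.
split=> [i r r' rr' | a r r' rr'].
  by apply: (shiftmx_mono (iota_ker i) (U0pVW (i, r)) (UpVW (i, r)) (U0pVW (i, r'))
    (UpVW (i, r'))); [apply: U0_vert | apply: U_vert].
by apply: (shiftmx_arrow (iota_ker _) (iota_ker _) (esym (iota_hom a)) (pi_hom a)
  (U0pVW (qsrc a, r)) (UpVW (qsrc a, r)) (U0pVW (qtgt a, r')) (UpVW (qtgt a, r')));
  [apply: U0_hor | apply: U_hor].
Qed.

Lemma fibre_act_torsor U0 : fibre U0 ->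
  is_torsor fibre (is_Rhom_quot str W V) (hom_quot_eq W V)
    (@homfam0 _ _ d S X) (@homfamD _ _ d S X) fibre_act.
Proof.
move=> U0VW; split=> [| f U fR UVW | f g U _ _ fg UVW | U UVW | ].
- by exists U0.
- exact: Psi_fibre_act fR UVW.
- exact: fibre_act_eq UVW fg.
- exact: fibre_act0 UVW.
split=> [f g U _ _ _ | U U' UVW U'VW | f U _ UVW fU p].
- exact: fibre_actD.
- have UU'R := is_Rhom_quot_coord UVW U'VW.
  exists (fibre_coord U U') => //.
  exact: fibre_coord_inj (Psi_fibre_act UU'R UVW) U'VW (fibre_coord_act _ UVW).
have := fibre_coord_act f UVW p; rewrite fU /fibre_coord shiftmx_id.
by rewrite sub0r mulmxN eqmx_opp /homfam0 subr0.
Qed.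

Lemma fibre_coord_bij U0 : fibre U0 ->
  is_bij_quot fibre (is_Rhom_quot str W V) (hom_quot_eq W V) (fibre_coord U0).
Proof.
move=> U0VW; split=> [U UVW | U U' UVW U'VW | f fR].
- exact: is_Rhom_quot_coord U0VW UVW.
- exact: fibre_coord_inj UVW U'VW.
- exists (fibre_act f U0); first exact: Psi_fibre_act fR U0VW.
  exact: fibre_coord_act U0VW.
Qed.

End ReprFibre.

Theorem lemma3p13 (Q : quiver) (X Y S : rep KC Q)
    (iota : repfam X Y) (pi : repfam Y S)
    (str : bool) (d : nat)
    (hd : if str then (1 < d)%N else (0 < d)%N)
    (eta : short_exact iota pi)
    (V : subfam X d) (W : subfam S d)
    (hIm : exists U : subfam Y d, is_Rsub str U /\ Psi_is iota pi U V W) :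
  (exists act : homfam d S X -> subfam Y d -> subfam Y d,
     is_torsor (Psi_fibre str iota pi V W) (is_Rhom_quot str W V)
       (hom_quot_eq W V) (@homfam0 _ _ d S X) (@homfamD _ _ d S X) act) /\
  (exists F : subfam Y d -> homfam d S X,
     is_bij_quot (Psi_fibre str iota pi V W) (is_Rhom_quot str W V)
       (hom_quot_eq W V) F).
Proof.
(* The argument is vertexwise and needs no bound on d, so [hd] is unused. *)
have [U0 U0VW] := hIm.
split; first by exists (fibre_act iota pi (d:=d)); exact (fibre_act_torsor eta U0VW).
by exists (fibre_coord iota pi U0); exact (fibre_coord_bij eta U0VW).
Qed.
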